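(* Let $H=\sum_{i=1}^m H_i$ be an instance of the $k$-local Hamiltonian problem on $n$ qubits and let $a\ge 0$. If there exists a state $|\Gamma\rangle$ such that $\langle\Gamma|H|\Gamma\rangle\le am$, then there exists a strategy for the $r$ entangled provers in Protocol $P$ that is accepted with probability at least $1-a/2$.
   Context: An instance of the $k$-local Hamiltonian problem on $n$ qubits is $H=\sum_{i=1}^m H_i$ on $(\mathbb{C}^2)^{\otimes n}$, each $H_i$ positive semidefinite of operator norm at most $1$ acting on a set $S_i\subseteq[n]$ of at most $k$ qubits (tensored with identity elsewhere). Let $\mathcal{C}$ be a quantum error-correcting code encoding $1$ logical qubit into $r$ physical qubits, which corrects all single-qubit Pauli errors and such that every codeword has maximally mixed reduced density matrix $I/2$ on any single qubit (e.g. the $5$-qubit code, $r=5$). Protocol $P$ (one round, $r$ provers who may share entanglement but not communicate): the verifier performs each of the following two tests with probability $1/2$. Test 1: pick $j\in[m]$ uniformly; ask every prover for its share of all qubits in $S_j$; decode each group of $r$ shares (one per prover) of each qubit of $S_j$ with the decoding map of $\mathcal{C}$, measure the resulting $k$-qubit state with $\{H_j, I-H_j\}$, and reject if the outcome is $H_j$. Test 2: pick $i\in[n]$ uniformly and a set $S\subseteq[n]$ of size $k$ uniformly among those containing $i$; with probability $1/2$ ask one uniformly random prover for its shares of all qubits in $S$ and the other $r-1$ provers for their share of qubit $i$ only; with probability $1/2$ ask all provers for their share of qubit $i$; in both cases reject unless the $r$ received shares of qubit $i$ lie in the codespace of $\mathcal{C}$ (projective measurement onto the codespace). *)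

From HB Require Import structures.
From mathcomp Require Import all_boot all_order all_algebra.
Set Implicit Arguments. Unset Strict Implicit. Unset Printing Implicit Defensive.
Import Order.TTheory GRing.Theory Num.Theory.
Local Open Scope ring_scope.

Notation qstr N := {ffun 'I_N -> bool}.

Section QDefs.
Variable C : numClosedFieldType.

(* vectors and operators on the Hilbert space with orthonormal basis T;
   A x y = <x|A|y>. *)
Definition vect (T : finType) := T -> C.
Definition oper (T : finType) := T -> T -> C.

Definition dotp (T : finType) (u v : vect T) : C := \sum_x (u x)^* * v x.
Definition expect (T : finType) (v : vect T) (A : oper T) : C :=
  \sum_x \sum_y (v x)^* * A x y * v y.
Definition applyop (T : finType) (A : oper T) (v : vect T) : vect T :=
  fun x => \sum_y A x y * v y.
Definition opmul (T : finType) (A B : oper T) : oper T :=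
  fun x z => \sum_y A x y * B y z.
Definition adj (T : finType) (A : oper T) : oper T := fun x y => (A y x)^*.
Definition idop (T : finType) : oper T := fun x y => (x == y)%:R.

Definition unit_vec (T : finType) (v : vect T) := dotp v v = 1.
Definition psd (T : finType) (A : oper T) := forall v : vect T, 0 <= expect v A.
Definition normle1 (T : finType) (A : oper T) :=
  forall v : vect T, dotp (applyop A v) (applyop A v) <= dotp v v.
Definition unitary (T : finType) (U : oper T) :=
  opmul (adj U) U = @idop T /\ opmul U (adj U) = @idop T.

Definition restr (n : nat) (S : {set 'I_n}) (x : qstr n) : qstr n :=
  [ffun i => (i \in S) && x i].

(* A acts on the qubits of S (tensored with identity elsewhere) *)
Definition acts_on (n : nat) (S : {set 'I_n}) (A : oper (qstr n)) :=
  exists h : oper (qstr n), forall x y,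
    A x y = h (restr S x) (restr S y) * (restr (~: S) x == restr (~: S) y)%:R.

Definition klocal_instance (n k m : nat) (Hs : 'I_m -> oper (qstr n))
    (S : 'I_m -> {set 'I_n}) :=
  forall j, [/\ #|S j| <= k, acts_on (S j) (Hs j), psd (Hs j) & normle1 (Hs j)]%N.

Definition hamiltonian (n m : nat) (Hs : 'I_m -> oper (qstr n)) : oper (qstr n) :=
  fun x y => \sum_j Hs j x y.

(* ---------- the code C : 1 logical qubit into r physical qubits ----------
   Enc : encoding isometry, Enc s b = <s|Enc|b>. *)
Definition enc_isometry (r : nat) (Enc : qstr r -> bool -> C) :=
  forall b b', \sum_s (Enc s b)^* * Enc s b' = (b == b')%:R.

Definition codeproj (r : nat) (Enc : qstr r -> bool -> C) : oper (qstr r) :=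
  fun s t => \sum_b Enc s b * (Enc t b)^*.

Definition pauliI : oper bool := fun b b' => (b == b')%:R.
Definition pauliX : oper bool := fun b b' => (b != b')%:R.
Definition pauliY : oper bool :=
  fun b b' => if b == b' then 0 else (if b then 'i else - 'i).
Definition pauliZ : oper bool :=
  fun b b' => (b == b')%:R * (if b then -1 else 1).
Definition is_pauli (P : oper bool) :=
  P = pauliI \/ P = pauliX \/ P = pauliY \/ P = pauliZ.

Definition agree_off (r : nat) (q : 'I_r) (s t : qstr r) :=
  [forall j, (j != q) ==> (s j == t j)].

Definition single_qubit_op (r : nat) (q : 'I_r) (P : oper bool) : oper (qstr r) :=
  fun s t => P (s q) (t q) * (agree_off q s t)%:R.

(* Decoding map D (a quantum channel from r qubits to 1 qubit), given in the
   Heisenberg picture by the images G b b' := D^*( |b><b'| ) of matrix units,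
   so that D^*(A) = \sum_{b,b'} A b b' * G b b'. *)
Definition dual_channel (r : nat) (G : bool -> bool -> oper (qstr r)) :=
  (* complete positivity of D (Choi matrix of D^* is psd) *)
  psd (fun bs bt : bool * qstr r => G bs.1 bt.1 bs.2 bt.2) /\
  (* trace preservation of D (D^* unital) *)
  (forall s t, \sum_b G b b s t = (s == t)%:R).

(* D corrects every single-qubit Pauli error E on the code:
   D(E Enc rho Enc^* E^* ) = rho for all rho, i.e. Enc^* E^* D^*(A) E Enc = A. *)
Definition corrects_single_paulis (r : nat) (Enc : qstr r -> bool -> C)
    (G : bool -> bool -> oper (qstr r)) :=
  forall (q : 'I_r) (P : oper bool), is_pauli P ->
  let EEnc := fun (s : qstr r) (c : bool) => \sum_(u : qstr r) single_qubit_op q P s u * Enc u c in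
  forall b b' c c',
    \sum_(s : qstr r) \sum_(t : qstr r) (EEnc s c)^* * G b b' s t * EEnc t c' = ((b == c) && (b' == c'))%:R.

Definition reduced1 (r : nat) (q : 'I_r) (v : vect (qstr r)) : oper bool :=
  fun b b' => \sum_(s : qstr r) \sum_(t : qstr r)
    ((s q == b) && (t q == b') && agree_off q s t)%:R * v s * (v t)^*.

Definition codewords_locally_mixed (r : nat) (Enc : qstr r -> bool -> C) :=
  forall v : vect (qstr r), unit_vec v -> applyop (codeproj Enc) v = v ->
  forall q : 'I_r, reduced1 q v = fun b b' => (b == b')%:R / 2%:R.

(* ---------- the protocol P with r provers ----------
   Label register: position (p,i) holds prover p's share of qubit i. *)
Notation lab n r := {ffun 'I_r * 'I_n -> bool}.
Definition joint (n r : nat) (W : finType) := (lab n r * {ffun 'I_r -> W})%type.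

Definition rowp (n r : nat) (x : lab n r) (p : 'I_r) : qstr n := [ffun i => x (p, i)].
Definition grp (n r : nat) (x : lab n r) (i : 'I_n) : qstr r := [ffun p => x (p, i)].

(* A general strategy: each prover p holds the n share-qubits (p,i) plus a
   private workspace W; the provers share an arbitrary entangled state psi.
   On question Q (a set of qubit indices) prover p applies a unitary
   sU p Q to its own registers and sends its share-qubits (p,i), i in Q. *)
Record strategy (n r : nat) := Strategy {
  sW : finType;
  spsi : vect (joint n r sW);
  sU : 'I_r -> {set 'I_n} -> oper (qstr n * sW)%type }.
Arguments sW {n r} s.
Arguments spsi {n r} s _.
Arguments sU {n r} s _ _ _ _.

Definition valid_strategy (n r : nat) (st : strategy n r) :=
  unit_vec (spsi st) /\ forall p Q, unitary (sU st p Q).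

Definition tensU (n r : nat) (W : finType) (U : 'I_r -> oper (qstr n * W)%type) :
  oper (joint n r W) :=
  fun x y => \prod_p U p (rowp x.1 p, x.2 p) (rowp y.1 p, y.2 p).

Definition post_state (n r : nat) (st : strategy n r) (Q : 'I_r -> {set 'I_n}) :
  vect (joint n r (sW st)) :=
  applyop (tensU (fun p => sU st p (Q p))) (spsi st).

Arguments post_state {n r} st Q _.

Definition agree_off_groups (n r : nat) (W : finType) (A : {set 'I_n})
    (x y : joint n r W) :=
  [forall p, forall i, (i \notin A) ==> (x.1 (p, i) == y.1 (p, i))] && (x.2 == y.2).

Section Protocol.
Variables (n k m r : nat) (Hs : 'I_m -> oper (qstr n)) (S : 'I_m -> {set 'I_n})
  (Enc : qstr r -> bool -> C) (G : bool -> bool -> oper (qstr r)).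

(* Test 1, term j: rejection POVM element (Heisenberg picture): decode the
   groups of the qubits of S_j with D and measure H_j. *)
Definition rej1 (W : finType) (j : 'I_m) : oper (joint n r W) :=
  fun x y => (agree_off_groups (S j) x y)%:R *
    \sum_(z : qstr n | restr (S j) z == z) \sum_(z' : qstr n | restr (S j) z' == z')
       Hs j z z' * \prod_(i in S j) G (z i) (z' i) (grp x.1 i) (grp y.1 i).

(* Test 2: acceptance projector: the r shares of qubit i lie in the codespace *)
Definition acc2 (W : finType) (i : 'I_n) : oper (joint n r W) :=
  fun x y => (agree_off_groups [set i] x y)%:R * codeproj Enc (grp x.1 i) (grp y.1 i).

Definition ksets (i : 'I_n) : {set {set 'I_n}} :=
  [set T : {set 'I_n} | (i \in T) && (#|T| == k)%N].

Definition accept_prob (st : strategy n r) : C :=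
  2^-1 * ((\sum_j (1 - expect (post_state st (fun _ => S j)) (rej1 (W := sW st) j))) / m%:R)
  + 2^-1 * ((\sum_i
      ((\sum_(T in ksets i)
          (2^-1 * ((\sum_p0 expect
                      (post_state st (fun p => if p == p0 then T else [set i]))
                      (acc2 (W := sW st) i)) / r%:R)
           + 2^-1 * expect (post_state st (fun _ => [set i])) (acc2 (W := sW st) i)))
       / #|ksets i|%:R)) / n%:R).
End Protocol.
End QDefs.
Arguments klocal_instance {C n} k {m} Hs S.
Arguments accept_prob {C n} k {m r} Hs S Enc G st.

From HB Require Import structures.
From mathcomp Require Import all_boot all_order all_algebra.
From mathcomp Require Import ring.
From Stdlib Require Import FunctionalExtensionality.
Set Implicit Arguments. Unset Strict Implicit. Unset Printing Implicit Defensive.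
Import Order.TTheory GRing.Theory Num.Theory.
Local Open Scope ring_scope.

(* The honest provers share the encoding of the witness, Enc^{(x)n} |Gamma>, each holding one
   share of every logical qubit, and answer every question without acting on their registers.
   Every group of shares then lies in the codespace, so Test 2 always accepts; and since the
   decoder corrects the trivial error, i.e. inverts the encoding, Test 1 rejects on term j with
   probability <Gamma|H_j|Gamma>.  Averaging, the acceptance probability is
   1 - <Gamma|H|Gamma>/(2m) >= 1 - a/2. *)

Local Notation lab n r := {ffun 'I_r * 'I_n -> bool}.

Section Expectation.
Variable C : numClosedFieldType.

Lemma sum_delta (T : finType) (F : T -> C) x : \sum_y (x == y)%:R * F y = F x.
Proof.
rewrite (bigD1 x) //= eqxx mul1r big1 ?addr0 // => y Hy.
by rewrite eq_sym (negbTE Hy) mul0r.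
Qed.

Lemma sum_delta_r (T : finType) (F : T -> C) x : \sum_y (y == x)%:R * F y = F x.
Proof. by rewrite -(sum_delta F x); apply: eq_bigr => y _; rewrite eq_sym. Qed.

Lemma sum_delta_cond (T : finType) (P : pred T) (F : T -> C) x :
  P x -> \sum_(y | P y) (y == x)%:R * F y = F x.
Proof.
move=> Px; rewrite (bigD1 x) //= eqxx mul1r big1 ?addr0 // => y /andP[_ /negbTE->].
by rewrite mul0r.
Qed.

Lemma natr_forall (I : finType) (P : pred I) : [forall i, P i]%:R = \prod_i (P i)%:R :> C.
Proof.
have [/forallP allP | /forallPn [i Pi]] := boolP [forall i, P i].
  by rewrite big1 // => i _; rewrite allP.
by rewrite (bigD1 i) //= (negbTE Pi) mul0r.
Qed.

Lemma exchange_big2 (A B D E : finType) (P : pred A) (Q : pred B)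
    (F : A -> B -> D -> E -> C) :
  \sum_(a | P a) \sum_(b | Q b) \sum_c \sum_d F a b c d =
  \sum_c \sum_d \sum_(a | P a) \sum_(b | Q b) F a b c d.
Proof.
under eq_bigr do rewrite exchange_big.
under eq_bigr do under eq_bigr do rewrite exchange_big.
by rewrite exchange_big; apply: eq_bigr => c _; rewrite exchange_big.
Qed.

Lemma eq_expect (T : finType) (v : vect C T) (A B : oper C T) :
  A =2 B -> expect v A = expect v B.
Proof. by move=> eqAB; apply: eq_bigr => x _; apply: eq_bigr => y _; rewrite eqAB. Qed.

Lemma eq_expect_vect (T : finType) (v w : vect C T) (A : oper C T) :
  v =1 w -> expect v A = expect w A.
Proof. by move=> eqvw; apply: eq_bigr => x _; apply: eq_bigr => y _; rewrite !eqvw. Qed.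

Lemma expect_sum (T I : finType) (P : pred I) (v : vect C T) (A : I -> oper C T) :
  expect v (fun x y => \sum_(i | P i) A i x y) = \sum_(i | P i) expect v (A i).
Proof.
rewrite /expect; under eq_bigr do under eq_bigr do rewrite mulr_sumr mulr_suml.
by under eq_bigr do rewrite exchange_big /=; rewrite exchange_big.
Qed.

Lemma expectZ (T : finType) (v : vect C T) c (A : oper C T) :
  expect v (fun x y => c * A x y) = c * expect v A.
Proof.
rewrite /expect mulr_sumr; apply: eq_bigr => x _; rewrite mulr_sumr.
by apply: eq_bigr => y _; ring.
Qed.

Lemma expect_idop (T : finType) (v : vect C T) : expect v (@idop C T) = dotp v v.
Proof.
apply: eq_bigr => x _; rewrite -[RHS](sum_delta (fun y => (v x)^* * v y)).
by apply: eq_bigr => y _; rewrite /idop; ring.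
Qed.

Lemma idop_unitary (T : finType) : unitary (@idop C T).
Proof.
have idop_mul : opmul (adj (@idop C T)) (@idop C T) = @idop C T.
  do 2 apply: functional_extensionality => ?.
  rewrite /opmul /adj /idop; under eq_bigr do rewrite conjC_nat.
  exact: sum_delta_r.
have idop_mul' : opmul (@idop C T) (adj (@idop C T)) = @idop C T.
  apply: functional_extensionality => x; apply: functional_extensionality => z.
  rewrite /opmul /adj /idop; under eq_bigr do rewrite conjC_nat.
  by rewrite (sum_delta (fun y => (z == y)%:R)) eq_sym.
by split.
Qed.
End Expectation.

Section Encoding.
Variables (C : numClosedFieldType) (r : nat) (Enc : qstr r -> bool -> C).
Hypothesis Enc_iso : enc_isometry Enc.

Lemma enc_isometry_gt0 : (0 < r)%N.
Proof.
move: Enc Enc_iso; case: r => // E E_iso; exfalso.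
pose s0 : qstr 0 := [ffun i => false].
have sum_qstr0 (F : qstr 0 -> C) : \sum_s F s = F s0.
  rewrite (big_pred1 s0) // => s /=.
  suff -> : s = s0 by rewrite eqxx.
  by apply/ffunP => -[].
move: (E_iso true true) (E_iso true false) (E_iso false false); rewrite !sum_qstr0 /=.
move=> norm_true /eqP; rewrite mulf_eq0 => /orP[/eqP E0 | /eqP E0] norm_false.
  by move/eqP: norm_true; rewrite E0 mul0r eq_sym oner_eq0.
by move/eqP: norm_false; rewrite E0 mulr0 eq_sym oner_eq0.
Qed.

Lemma enc_sandwich_id b b' :
  \sum_s \sum_t (Enc s b)^* * (s == t)%:R * Enc t b' = (b == b')%:R.
Proof.
rewrite -Enc_iso; apply: eq_bigr => s _.
by under eq_bigr do rewrite -mulrA; rewrite -mulr_sumr sum_delta.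
Qed.

Lemma enc_sandwich_codeproj b b' :
  \sum_s \sum_t (Enc s b)^* * codeproj Enc s t * Enc t b' = (b == b')%:R.
Proof.
transitivity (\sum_s \sum_t \sum_c (Enc s b)^* * Enc s c * ((Enc t c)^* * Enc t b')).
  apply: eq_bigr => s _; apply: eq_bigr => t _.
  by rewrite /codeproj mulr_sumr mulr_suml; apply: eq_bigr => c _; ring.
under eq_bigr do rewrite exchange_big /=.
rewrite exchange_big /=.
under eq_bigr do under eq_bigr do rewrite -mulr_sumr Enc_iso.
by under eq_bigr do rewrite -mulr_suml Enc_iso; rewrite sum_delta.
Qed.
End Encoding.

Lemma single_qubit_op_pauliI (C : numClosedFieldType) (r : nat) (q : 'I_r) (s t : qstr r) :
  single_qubit_op q (pauliI C) s t = (s == t)%:R.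
Proof.
rewrite /single_qubit_op /pauliI -natrM mulnb.
suff -> : (s q == t q) && agree_off q s t = (s == t) by [].
apply/idP/eqP => [/andP[/eqP eq_q /forallP eq_off] | ->]; last first.
  by rewrite eqxx; apply/forallP => j; apply/implyP.
apply/ffunP => j; have [-> // | j_q] := eqVneq j q.
exact: (eqP (implyP (eq_off j) j_q)).
Qed.

Lemma enc_sandwich_decode (C : numClosedFieldType) (r : nat) (Enc : qstr r -> bool -> C)
    (G : bool -> bool -> oper C (qstr r)) :
  enc_isometry Enc -> corrects_single_paulis Enc G -> forall b b' c c',
  \sum_s \sum_t (Enc s c)^* * G b b' s t * Enc t c' = ((b == c) && (b' == c'))%:R.
Proof.
move=> Enc_iso corrects b b' c c'.
pose q := Ordinal (enc_isometry_gt0 Enc_iso).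
have no_error s d : \sum_u single_qubit_op q (pauliI C) s u * Enc u d = Enc s d.
  by under eq_bigr do rewrite single_qubit_op_pauliI; rewrite sum_delta.
have := corrects q _ (or_introl erefl) b b' c c'.
by under eq_bigr do under eq_bigr do rewrite !no_error.
Qed.

Section Locality.
Variables (C : numClosedFieldType) (n : nat) (S : {set 'I_n}).

Lemma restr_supported_delta (w w' z z' : qstr n) :
  restr S w = w -> restr S w' = w' ->
  [forall l, if l \in S then (w l == z l) && (w' l == z' l) else z l == z' l] =
  [&& w == restr S z, w' == restr S z' & restr (~: S) z == restr (~: S) z'].
Proof.
move=> w_supp w'_supp; apply/forallP/and3P => [agree | [/eqP-> /eqP-> /eqP eq_off] l].
  split; apply/eqP/ffunP => l; have := agree l; rewrite ?ffunE ?in_setC.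
  - by case: (boolP (l \in S)) => lS /=; [case/andP => /eqP | rewrite -w_supp ffunE (negbTE lS)].
  - by case: (boolP (l \in S)) => lS /=; [case/andP => _ /eqP | rewrite -w'_supp ffunE (negbTE lS)].
  - by case: (l \in S) => //= /eqP->.
rewrite !ffunE; case: (boolP (l \in S)) => lS /=; first by rewrite !eqxx.
by move/ffunP/(_ l): eq_off; rewrite !ffunE in_setC lS /= => ->.
Qed.

Lemma acts_on_restr_sum (A : oper C (qstr n)) : acts_on S A -> forall z z' : qstr n,
  \sum_(w | restr S w == w) \sum_(w' | restr S w' == w') A w w' *
    \prod_l (if l \in S then ((w l == z l) && (w' l == z' l))%:R else (z l == z' l)%:R)
  = A z z'.
Proof.
move=> [h A_local] z z'.
have restr_idem (v : qstr n) : restr S (restr S v) = restr S v.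
  by apply/ffunP => l; rewrite !ffunE andbA andbb.
transitivity (\sum_(w | restr S w == w) (w == restr S z)%:R * \sum_(w' | restr S w' == w')
   (w' == restr S z')%:R * ((restr (~: S) z == restr (~: S) z')%:R * A w w')).
  apply: eq_bigr => w /eqP w_supp; rewrite mulr_sumr; apply: eq_bigr => w' /eqP w'_supp.
  have -> : \prod_l (if l \in S then ((w l == z l) && (w' l == z' l))%:R
                    else (z l == z' l)%:R) =
            [forall l, if l \in S then (w l == z l) && (w' l == z' l) else z l == z' l]%:R :> C.
    by rewrite natr_forall; apply: eq_bigr => l _; case: (l \in S).
  by rewrite restr_supported_delta // -!mulnb !natrM; ring.
rewrite !sum_delta_cond ?restr_idem // !A_local !restr_idem.
have -> : restr (~: S) (restr S z) = restr (~: S) (restr S z').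
  by apply/ffunP => l; rewrite !ffunE in_setC; case: (l \in S).
by rewrite eqxx mulr1 mulrC.
Qed.
End Locality.

Section ShareGroups.
Variables (C : numClosedFieldType) (n r : nat).

Definition groups (x : lab n r) : {ffun 'I_n -> qstr r} := [ffun l => grp x l].
Definition of_groups (f : {ffun 'I_n -> qstr r}) : lab n r := [ffun pl => f pl.2 pl.1].

Lemma groupsK : cancel groups of_groups.
Proof. by move=> x; apply/ffunP => -[p l]; rewrite !ffunE. Qed.

Lemma of_groupsK : cancel of_groups groups.
Proof. by move=> f; apply/ffunP => l; apply/ffunP => p; rewrite !ffunE. Qed.

Lemma sum_groups (F : {ffun 'I_n -> qstr r} -> C) :
  \sum_(x : lab n r) F (groups x) = \sum_f F f.
Proof.
rewrite (reindex of_groups) /=; last by exists groups => x _; rewrite ?groupsK ?of_groupsK.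
by apply: eq_bigr => f _; rewrite of_groupsK.
Qed.

Lemma sum_lab_prod (F : 'I_n -> qstr r -> qstr r -> C) :
  \sum_(x : lab n r) \sum_(y : lab n r) \prod_l F l (grp x l) (grp y l) =
  \prod_l \sum_s \sum_t F l s t.
Proof.
rewrite bigA_distr_bigA /=.
transitivity (\sum_(f : {ffun 'I_n -> qstr r}) \sum_(y : lab n r) \prod_l F l (f l) (grp y l)).
  rewrite -(sum_groups (fun f => \sum_(y : lab n r) \prod_l F l (f l) (grp y l))).
  by apply: eq_bigr => x _; apply: eq_bigr => y _; apply: eq_bigr => l _; rewrite ffunE.
apply: eq_bigr => f _; rewrite bigA_distr_bigA /=.
rewrite -(sum_groups (fun g => \prod_l F l (f l) (g l))).
by apply: eq_bigr => y _; apply: eq_bigr => l _; rewrite ffunE.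
Qed.

Lemma eq_lab_groups (x y : lab n r) : (x == y) = [forall l, grp x l == grp y l].
Proof.
rewrite -(inj_eq (can_inj groupsK)); apply/eqP/forallP => [eq_xy l | eq_grp].
  by move/ffunP/(_ l): eq_xy; rewrite !ffunE => ->.
by apply/ffunP => l; rewrite !ffunE; apply/eqP.
Qed.

Lemma tensU_idop (W : finType) (x y : joint n r W) :
  tensU (fun _ => @idop C (qstr n * W)%type) x y = (x == y)%:R.
Proof.
rewrite /tensU /idop -(natr_forall C (fun p => (rowp x.1 p, x.2 p) == (rowp y.1 p, y.2 p))).
congr (nat_of_bool _)%:R; apply/forallP/eqP => [eq_rows | -> //].
case: x y eq_rows => [x1 x2] [y1 y2] eq_rows; congr pair; apply/ffunP.
  by move=> [p l]; move: (eq_rows p) => /eqP[/ffunP/(_ l)]; rewrite !ffunE.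
by move=> p; move: (eq_rows p) => /eqP[].
Qed.
End ShareGroups.

Section UnitWorkspace.
Variables (C : numClosedFieldType) (n r : nat).
Local Notation J := (joint n r unit).

Lemma sum_joint_unit (F : J -> C) : \sum_x F x = \sum_(x : lab n r) F (x, [ffun=> tt]).
Proof.
transitivity (\sum_(x : J) F (x.1, x.2)); first by apply: eq_bigr => -[].
rewrite -(pair_bigA _ (fun x u => F (x, u))) /=; apply: eq_bigr => x _.
rewrite (big_pred1 [ffun=> tt]) // => u /=.
by apply/esym/eqP/ffunP => p; rewrite ffunE; case: (u p).
Qed.

Lemma eq_joint_unit (x y : J) : (x == y) = [forall l, grp x.1 l == grp y.1 l].
Proof.
case: x y => [x1 x2] [y1 y2] /=; rewrite -eq_lab_groups xpair_eqE.
suff -> : x2 == y2 by rewrite andbT.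
by apply/eqP/ffunP => p; case: (x2 p); case: (y2 p).
Qed.

Lemma agree_off_groups_prod (T : {set 'I_n}) (h : 'I_n -> qstr r -> qstr r -> C) (x y : J) :
  (agree_off_groups T x y)%:R * \prod_(l in T) h l (grp x.1 l) (grp y.1 l) =
  \prod_l (if l \in T then h l (grp x.1 l) (grp y.1 l) else (grp x.1 l == grp y.1 l)%:R).
Proof.
have -> : agree_off_groups T x y = [forall l, (l \notin T) ==> (grp x.1 l == grp y.1 l)].
  rewrite /agree_off_groups.
  have -> : x.2 == y.2 by apply/eqP/ffunP => p; case: (x.2 p); case: (y.2 p).
  rewrite andbT; apply/forallP/forallP => [agree l | agree p].
    apply/implyP => lT; apply/eqP/ffunP => p; rewrite !ffunE.
    exact: (eqP (implyP (forallP (agree p) l) lT)).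
  apply/forallP => l; apply/implyP => lT.
  by move: (implyP (agree l) lT) => /eqP/ffunP/(_ p); rewrite !ffunE => ->.
rewrite natr_forall [RHS](bigID (mem T)) /= mulrC; congr (_ * _).
  by apply: eq_bigr => l ->.
rewrite [LHS](bigID (mem T)) /= big1 ?mul1r => [|l -> //].
by apply: eq_bigr => l /negbTE ->.
Qed.
End UnitWorkspace.

Section EncodedState.
Variables (C : numClosedFieldType) (n r : nat) (Enc : qstr r -> bool -> C).
Variable Gamma : vect C (qstr n).

Definition encode_state : vect C (joint n r unit) :=
  fun x => \sum_z Gamma z * \prod_l Enc (grp x.1 l) (z l).

Lemma expect_encode_state_prod (D : 'I_n -> qstr r -> qstr r -> C) :
  expect encode_state (fun x y => \prod_l D l (grp x.1 l) (grp y.1 l)) =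
  \sum_z \sum_z' (Gamma z)^* * Gamma z' *
     \prod_l \sum_s \sum_t (Enc s (z l))^* * D l s t * Enc t (z' l).
Proof.
rewrite /expect sum_joint_unit; under eq_bigr do rewrite sum_joint_unit.
under [RHS]eq_bigr do under eq_bigr do rewrite -sum_lab_prod mulr_sumr.
under [RHS]eq_bigr do under eq_bigr do under eq_bigr do rewrite mulr_sumr.
rewrite exchange_big2; apply: eq_bigr => x _; apply: eq_bigr => y _.
rewrite rmorph_sum mulr_suml mulr_suml; apply: eq_bigr => z _.
rewrite mulr_sumr; apply: eq_bigr => z' _.
by rewrite rmorphM rmorph_prod /= !big_split /=; ring.
Qed.

Lemma expect_prod_delta :
  \sum_z \sum_z' (Gamma z)^* * Gamma z' * \prod_l (z l == z' l)%:R = dotp Gamma Gamma.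
Proof.
apply: eq_bigr => z _; rewrite -[RHS](sum_delta (fun z' => (Gamma z)^* * Gamma z')).
apply: eq_bigr => z' _; rewrite -natr_forall.
have -> : [forall l, z l == z' l] = (z == z').
  by apply/forallP/eqP => [eq_zz' | -> //]; apply/ffunP => l; apply/eqP.
by ring.
Qed.

Hypothesis Enc_iso : enc_isometry Enc.

Lemma encode_state_norm : dotp encode_state encode_state = dotp Gamma Gamma.
Proof.
transitivity (expect encode_state (fun x y => \prod_l (grp x.1 l == grp y.1 l)%:R)).
  by rewrite -expect_idop; apply: eq_expect => x y; rewrite -natr_forall -eq_joint_unit.
rewrite (expect_encode_state_prod (fun _ s t => (s == t)%:R)) -expect_prod_delta.
apply: eq_bigr => z _; apply: eq_bigr => z' _.
by congr (_ * _); apply: eq_bigr => l _; rewrite enc_sandwich_id.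
Qed.

Lemma expect_encode_state_acc2 i :
  expect encode_state (acc2 Enc (W := unit) i) = dotp Gamma Gamma.
Proof.
transitivity (expect encode_state (fun x y => \prod_l
   (if l \in [set i] then codeproj Enc (grp x.1 l) (grp y.1 l)
    else (grp x.1 l == grp y.1 l)%:R))).
  apply: eq_expect => x y.
  by rewrite -(agree_off_groups_prod _ (fun l => codeproj Enc)) big_set1.
rewrite (expect_encode_state_prod (fun l s t =>
  if l \in [set i] then codeproj Enc s t else (s == t)%:R)) -expect_prod_delta.
apply: eq_bigr => z _; apply: eq_bigr => z' _.
congr (_ * _); apply: eq_bigr => l _.
by case: (l \in [set i]); rewrite ?enc_sandwich_codeproj ?enc_sandwich_id.
Qed.
End EncodedState.

Lemma expect_encode_state_rej1 (C : numClosedFieldType) (n m r : nat)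
    (Hs : 'I_m -> oper C (qstr n)) (S : 'I_m -> {set 'I_n})
    (Enc : qstr r -> bool -> C) (G : bool -> bool -> oper C (qstr r))
    (Gamma : vect C (qstr n)) (j : 'I_m) :
  enc_isometry Enc -> corrects_single_paulis Enc G -> acts_on (S j) (Hs j) ->
  expect (encode_state Enc Gamma) (rej1 Hs S G (W := unit) j) = expect Gamma (Hs j).
Proof.
move=> Enc_iso corrects Hj_local.
pose D (w w' : qstr n) l (s t : qstr r) :=
  if l \in S j then G (w l) (w' l) s t else (s == t)%:R.
transitivity (expect (encode_state Enc Gamma) (fun x y =>
  \sum_(w | restr (S j) w == w) \sum_(w' | restr (S j) w' == w')
     Hs j w w' * \prod_l D w w' l (grp x.1 l) (grp y.1 l))).
  apply: eq_expect => x y; rewrite /rej1 mulr_sumr; apply: eq_bigr => w _.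
  rewrite mulr_sumr; apply: eq_bigr => w' _.
  by rewrite mulrCA (agree_off_groups_prod _ (fun l => G (w l) (w' l))).
rewrite expect_sum; under eq_bigr do rewrite expect_sum.
under eq_bigr do under eq_bigr do rewrite expectZ (expect_encode_state_prod _ _ (D _ _)).
transitivity (\sum_(w | restr (S j) w == w) \sum_(w' | restr (S j) w' == w') \sum_z \sum_z'
  Hs j w w' * ((Gamma z)^* * Gamma z' * \prod_l (if l \in S j
     then ((w l == z l) && (w' l == z' l))%:R else (z l == z' l)%:R))).
  apply: eq_bigr => w _; apply: eq_bigr => w' _; rewrite mulr_sumr; apply: eq_bigr => z _.
  rewrite mulr_sumr; apply: eq_bigr => z' _; congr (_ * (_ * _)).
  apply: eq_bigr => l _; rewrite /D; case: (l \in S j).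
    exact: enc_sandwich_decode.
  exact: enc_sandwich_id.
rewrite exchange_big2; apply: eq_bigr => z _; apply: eq_bigr => z' _.
rewrite -(acts_on_restr_sum Hj_local z z') mulr_sumr mulr_suml; apply: eq_bigr => w _.
by rewrite mulr_sumr mulr_suml; apply: eq_bigr => w' _; ring.
Qed.

Lemma ksets_gt0 (n k : nat) (i : 'I_n) : (0 < k)%N -> (k <= n)%N -> (0 < #|ksets k i|)%N.
Proof.
move=> k_gt0 k_le_n.
have [A] : exists A, A \in [set A : {set 'I_n} | #|A| == k].
  by apply/card_gt0P; rewrite card_draws card_ord bin_gt0.
rewrite inE => /eqP cardA; apply/card_gt0P.
have [iA | iA] := boolP (i \in A); first by exists A; rewrite !inE iA cardA eqxx.
have [a aA] : exists a, a \in A by apply/card_gt0P; rewrite cardA.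
exists (i |: (A :\ a)); rewrite !inE eqxx cardsU1 !inE (negbTE iA) andbF /=.
by move: cardA; rewrite (cardsD1 a A) aA add1n => <-.
Qed.

Section HonestStrategy.
Variables (C : numClosedFieldType) (n k m r : nat).
Variables (Hs : 'I_m -> oper C (qstr n)) (S : 'I_m -> {set 'I_n}).
Variables (Enc : qstr r -> bool -> C) (G : bool -> bool -> oper C (qstr r)).
Variable Gamma : vect C (qstr n).

Definition honest_strategy : strategy C n r :=
  Strategy (encode_state Enc Gamma) (fun _ _ => @idop C (qstr n * unit)%type).

Lemma post_state_honest Q : post_state (st := honest_strategy) Q =1 encode_state Enc Gamma.
Proof.
move=> x; rewrite /post_state /applyop /=.
by under eq_bigr do rewrite tensU_idop; rewrite sum_delta.
Qed.

Hypotheses (Enc_iso : enc_isometry Enc) (Gamma_unit : unit_vec Gamma).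

Lemma honest_strategy_valid : valid_strategy honest_strategy.
Proof.
split=> [|p Q]; last exact: idop_unitary.
by rewrite /unit_vec /= encode_state_norm.
Qed.

Lemma accept_prob_honest :
  (0 < m)%N -> (0 < k)%N -> (k <= n)%N -> klocal_instance k Hs S ->
  corrects_single_paulis Enc G ->
  accept_prob k Hs S Enc G honest_strategy =
  1 - expect Gamma (hamiltonian Hs) / m%:R / 2%:R.
Proof.
move=> m_gt0 k_gt0 k_le_n Hs_local corrects.
have r_gt0 := enc_isometry_gt0 Enc_iso.
have n_gt0 : (0 < n)%N by apply: leq_trans k_le_n.
have rej j : expect (post_state (st := honest_strategy) (fun _ => S j))
    (rej1 Hs S G (W := unit) j) = expect Gamma (Hs j).
  rewrite (eq_expect_vect _ (post_state_honest _)) expect_encode_state_rej1 //.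
  by case: (Hs_local j).
have acc Q i : expect (post_state (st := honest_strategy) Q) (acc2 Enc (W := unit) i) = 1.
  by rewrite (eq_expect_vect _ (post_state_honest _)) expect_encode_state_acc2.
rewrite /accept_prob /=.
under eq_bigr do rewrite rej.
under [X in _ + _ * (X / _)]eq_bigr => i _ do
  under eq_bigr => T _ do under eq_bigr => p _ do rewrite acc.
under [X in _ + _ * (X / _)]eq_bigr => i _ do under eq_bigr => T _ do rewrite acc.
have natr_neq0 l : (0 < l)%N -> l%:R != 0 :> C by rewrite pnatr_eq0 -lt0n.
have test2_term : 2^-1 * ((\sum_(p < r) (1 : C)) / r%:R) + 2^-1 * 1 = 1.
  by rewrite sumr_const card_ord divff ?natr_neq0 //; field.
under [X in _ + _ * (X / _)]eq_bigr => i _ do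
  rewrite test2_term sumr_const divff ?natr_neq0 ?ksets_gt0 //.
rewrite sumr_const card_ord divff ?natr_neq0 // sumrB sumr_const card_ord -expect_sum.
by rewrite -[1 *+ m]/(m%:R); field; rewrite natr_neq0.
Qed.
End HonestStrategy.

Theorem mainTheorem4 (C : numClosedFieldType) (n k m r : nat)
  (Hs : 'I_m -> oper C (qstr n)) (S : 'I_m -> {set 'I_n})
  (Enc : qstr r -> bool -> C) (G : bool -> bool -> oper C (qstr r)) (a : C) :
  (0 < m)%N -> (0 < k)%N -> (k <= n)%N ->
  klocal_instance k Hs S ->
  enc_isometry Enc -> dual_channel G -> corrects_single_paulis Enc G ->
  codewords_locally_mixed Enc ->
  0 <= a ->
  (exists Gamma : vect C (qstr n),
      unit_vec Gamma /\ expect Gamma (hamiltonian Hs) <= a * m%:R) ->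
  exists st : strategy C n r,
    valid_strategy st /\ 1 - a / 2%:R <= accept_prob k Hs S Enc G st.
Proof.
move=> m_gt0 k_gt0 k_le_n Hs_local Enc_iso _ corrects _ _ [Gamma [Gamma_unit energy_le]].
exists (honest_strategy Enc Gamma); split; first exact: honest_strategy_valid.
rewrite accept_prob_honest //; apply: lerB => //.
by apply: ler_wpM2r; rewrite ?invr_ge0 ?ler0n // ler_pdivrMr ?ltr0n.
Qed.
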